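(* Let $X$ be a cubic vertex-transitive graph for which $1$ is a simple eigenvalue, let $\mathbf{z}$ be a $\pm1$ eigenvector for $1$, $V^+=\{x\mid\mathbf{z}(x)=1\}$, $V^-=\{x\mid \mathbf{z}(x)=-1\}$, and suppose $X[V^+]$ is the disjoint union of cycles $C_1,\dots,C_m$ and $X[V^-]$ is the disjoint union of cycles $D_1,\dots,D_m$, all of length $k$. Let $G$ be the contracted multigraph of $X$. Then every automorphism of $X$ induces an automorphism of $G$, so that $\mathrm{Aut}(X)\le \mathrm{Aut}(G)$, and every subgroup of $\mathrm{Aut}(X)$ acting transitively on $V(X)$ acts transitively on the arcs of $G$. In particular, $G$ is arc-transitive and bipartite.
   Context: The contracted multigraph $G$ of $X$ has $2m$ vertices $c_1,\dots,c_m,d_1,\dots,d_m$ (one for each cycle $C_i$ and each cycle $D_i$), and for each edge of $X$ joining a vertex of $C_i$ to a vertex of $D_r$ there is an edge of $G$ joining $c_i$ and $d_r$ (so parallel edges may occur). An arc of a multigraph is an edge together with a choice of direction. *)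

From HB Require Import structures.
From mathcomp Require Import all_boot all_order all_algebra all_fingroup.
Set Implicit Arguments. Unset Strict Implicit. Unset Printing Implicit Defensive.
Import Order.TTheory GRing.Theory Num.Theory.
Local Open Scope ring_scope.

Definition simple_graph (n : nat) (adj : rel 'I_n) : Prop :=
  symmetric adj /\ irreflexive adj.

Definition cubic (n : nat) (adj : rel 'I_n) : Prop :=
  forall x : 'I_n, #|[set y | adj x y]| = 3%N.

Definition AutX (n : nat) (adj : rel 'I_n) : {set {perm 'I_n}} :=
  [set g : {perm 'I_n} | [forall x, forall y, adj (g x) (g y) == adj x y]].

Definition vertex_transitive (n : nat) (adj : rel 'I_n) : Prop :=
  forall x y : 'I_n, exists2 g, g \in AutX adj & g x = y.

Definition adjmx (R : fieldType) (n : nat) (adj : rel 'I_n) : 'M[R]_n :=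
  \matrix_(i, j) (adj i j)%:R.

Definition induced_cycle (n : nat) (adj : rel 'I_n) (k : nat) (S : {set 'I_n}) : Prop :=
  (3 <= k)%N /\
  exists s : seq 'I_n,
    [/\ uniq s, size s = k, S = [set x in s] &
        forall x y, x \in s -> y \in s ->
          adj x y = (y == next s x) || (y == prev s x)].

Definition cycle_decomposition (n m k : nat) (adj : rel 'I_n)
    (U : {set 'I_n}) (Cs : 'I_m -> {set 'I_n}) : Prop :=
  [/\ forall i j, i != j -> [disjoint Cs i & Cs j],
      \bigcup_(i < m) Cs i = U,
      forall i j x y, i != j -> x \in Cs i -> y \in Cs j -> ~~ adj x y &
      forall i, induced_cycle adj k (Cs i)].

(* Contracted multigraph G: vertices c_i = inl i, d_i = inr i; the vertex w
   of G corresponds to the vertex set Gset C D w of X. *)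
Definition Gset (n m : nat) (C D : 'I_m -> {set 'I_n}) (w : 'I_m + 'I_m) : {set 'I_n} :=
  match w with inl i => C i | inr r => D r end.

(* Arcs of G: the arcs (u,v) of X with u, v of opposite sign under z (i.e.
   edges of X joining some C_i and some D_r, with a direction).  The arc (u,v)
   goes from the G-vertex containing u to the G-vertex containing v, and its
   reverse is (v,u). *)
Definition Garcs (R : ringType) (n : nat) (adj : rel 'I_n) (z : 'rV[R]_n)
    : {set 'I_n * 'I_n} :=
  [set a | adj a.1 a.2 && (z 0 a.1 != z 0 a.2)].

Definition arc_rev (n : nat) (a : 'I_n * 'I_n) : 'I_n * 'I_n := (a.2, a.1).

Definition autG (R : ringType) (n m : nat) (adj : rel 'I_n) (z : 'rV[R]_n)
    (C D : 'I_m -> {set 'I_n})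
    (phi : {perm 'I_m + 'I_m}) (psi : {perm 'I_n * 'I_n}) : Prop :=
  [/\ forall a, (psi a \in Garcs adj z) = (a \in Garcs adj z),
      forall a w, a \in Garcs adj z ->
        ((psi a).1 \in Gset C D (phi w)) = (a.1 \in Gset C D w),
      forall a w, a \in Garcs adj z ->
        ((psi a).2 \in Gset C D (phi w)) = (a.2 \in Gset C D w) &
      forall a, a \in Garcs adj z -> psi (arc_rev a) = arc_rev (psi a)].

Definition pairf (n : nat) (g : {perm 'I_n}) (a : 'I_n * 'I_n) : 'I_n * 'I_n :=
  (g a.1, g a.2).

Lemma pairf_inj (n : nat) (g : {perm 'I_n}) : injective (pairf g).
Proof.
move=> [a1 a2] [b1 b2] /= [/perm_inj -> /perm_inj ->]; by [].
Qed.

Definition pair_perm (n : nat) (g : {perm 'I_n}) : {perm 'I_n * 'I_n} :=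
  perm (@pairf_inj n g).

From HB Require Import structures.
From mathcomp Require Import all_boot all_order all_algebra all_fingroup.
From mathcomp Require Import zify.
Import Order.TTheory GRing.Theory Num.Theory.
Local Open Scope ring_scope.

(* Since 1 is a simple eigenvalue, every automorphism g of X maps z to a
   multiple of itself, so g preserves or swaps the sign classes V+ and V- and
   maps adjacent vertices of equal sign to adjacent vertices of equal sign.
   As each C_i and D_r is a connected induced cycle, g maps it into (hence
   onto) another one, i.e. g permutes the vertices of G.  The eigenvalue
   equation at x reads z(x) = (#same-sign neighbours - #other neighbours) z(x);
   as X is cubic, every vertex has exactly one neighbour of the opposite sign.
   An arc of G is therefore determined by its tail in X, so a subgroup of Aut(X)
   transitive on V(X) is transitive on the arcs of G. *)

Section Automorphisms.
Context {n : nat} {adj : rel 'I_n}.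

Lemma AutX_adj {g} : g \in AutX adj -> forall x y, adj (g x) (g y) = adj x y.
Proof. by rewrite inE => /forallP gA x y; apply/eqP; move/forallP: (gA x). Qed.

Lemma pair_permE (g : {perm 'I_n}) a : pair_perm g a = (g a.1, g a.2).
Proof. exact: permE. Qed.

Lemma AutX_inv {g} : g \in AutX adj -> (g^-1)%g \in AutX adj.
Proof.
move=> gA; rewrite inE; apply/forallP => x; apply/forallP => y.
by rewrite -(AutX_adj gA) !permKV.
Qed.

Lemma col_perm_mulmx_adjmx (R : fieldType) p (M : 'M[R]_(p, n)) g :
  g \in AutX adj -> col_perm g M *m adjmx R adj = col_perm g (M *m adjmx R adj).
Proof.
move=> gA; apply/matrixP => i j; rewrite !mxE [RHS](reindex_inj (@perm_inj _ g)).
by apply: eq_bigr => x _; rewrite !mxE (AutX_adj gA).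
Qed.

End Automorphisms.

Lemma induced_cycle_neq0 {n} {adj : rel 'I_n} {k S} :
  induced_cycle adj k S -> S != set0.
Proof.
case=> k_ge3 [[|x s] [_ size_s -> _]]; first by rewrite -size_s in k_ge3.
by apply/set0Pn; exists x; rewrite inE mem_head.
Qed.

Lemma induced_cycle_closed {n} {adj : rel 'I_n} {k S} (P : pred 'I_n) :
  induced_cycle adj k S ->
  (forall x y, x \in S -> y \in S -> adj x y -> P x -> P y) ->
  forall u v, u \in S -> v \in S -> P u -> P v.
Proof.
case=> _ [s [uniq_s _ -> s_adj]] closedP u v; rewrite !inE => us vs Pu.
have := fconnect_cycle (cycle_next uniq_s) us v; rewrite vs => /iter_findex <-.
have iter_in i : iter i (next s) u \in s by elim: i => //= i; rewrite mem_next.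
elim: findex => //= i IH; apply: closedP IH; rewrite ?inE ?mem_next //.
by rewrite s_adj ?mem_next // eqxx.
Qed.

Section CycleDecomposition.
Context {n m k : nat} {adj : rel 'I_n} {U : {set 'I_n}} {Cs : 'I_m -> {set 'I_n}}.
Hypothesis decU : cycle_decomposition k adj U Cs.

Lemma cycle_decomposition_sub {i x} : x \in Cs i -> x \in U.
Proof. by case: decU => _ <- _ _ xCi; apply/bigcupP; exists i. Qed.

Lemma cycle_decomposition_cover x : x \in U -> exists i, x \in Cs i.
Proof. by case: decU => _ <- _ _ /bigcupP [i _ xCi]; exists i. Qed.

Lemma cycle_decomposition_adj {i j x y} :
  x \in Cs i -> y \in Cs j -> adj x y -> i = j.
Proof.
case: decU => _ _ noadj _ xCi yCj xy; apply/eqP/negPn/negP => ij.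
by move: (noadj _ _ _ _ ij xCi yCj); rewrite xy.
Qed.

Lemma cycle_decomposition_uniq {i j x} : x \in Cs i -> x \in Cs j -> i = j.
Proof.
case: decU => disj _ _ _ xCi xCj; apply/eqP/negPn/negP => ij.
by rewrite (disjointFr (disj _ _ ij) xCi) in xCj.
Qed.

End CycleDecomposition.

Lemma one_neq_opp1 (R : numDomainType) : (1 : R) != -1.
Proof. by rewrite -subr_eq0 opprK -(natrD R 1 1) pnatr_eq0. Qed.

Section SimpleEigenvector.
Context {R : fieldType} {n : nat} {adj : rel 'I_n} {lambda : R} {z : 'rV[R]_n}.
Hypotheses (simple_lambda : \rank (eigenspace (adjmx R adj) lambda) = 1%N)
  (z_eigen : z *m adjmx R adj = lambda *: z) (z_neq0 : z != 0).

Lemma AutX_eigenvector_scale {g} : g \in AutX adj ->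
  exists2 c : R, c != 0 & forall x, z 0 (g x) = c * z 0 x.
Proof.
move=> gA.
have eigen_lambda (v : 'rV_n) : v *m adjmx R adj = lambda *: v ->
    (v <= eigenspace (adjmx R adj) lambda)%MS.
  by move=> v_eigen; apply/eigenspaceP.
have gz_eigen : col_perm g z *m adjmx R adj = lambda *: col_perm g z.
  by rewrite col_perm_mulmx_adjmx // z_eigen linearZ.
have eigen_sub_z : (eigenspace (adjmx R adj) lambda <= z)%MS.
  have [_] := mxrank_leqif_sup (eigen_lambda z z_eigen).
  by rewrite rank_rV z_neq0 simple_lambda eqxx => <-.
have /sub_rVP [c gzE] := submx_trans (eigen_lambda _ gz_eigen) eigen_sub_z.
have scale x : z 0 (g x) = c * z 0 x.
  by have := congr1 (fun v : 'rV_n => v 0 x) gzE; rewrite !mxE.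
exists c => //; apply: contra_neq z_neq0 => c0; apply/rowP => x.
by rewrite -(permKV g x) mxE scale c0 mul0r.
Qed.

End SimpleEigenvector.

Definition cross_nbrs {R : pzRingType} {n} (adj : rel 'I_n) (z : 'rV[R]_n) x :=
  [set y | adj x y && (z 0 y != z 0 x)].

Section CrossNeighbours.
Context {R : numFieldType} {n : nat} {adj : rel 'I_n} {z : 'rV[R]_n}.
Hypotheses (simple_adj : simple_graph adj) (cubic_adj : cubic adj)
  (z_eigen : z *m adjmx R adj = z) (z_pm : forall x, z 0 x = 1 \/ z 0 x = -1).

Lemma pm1_neq0 x : z 0 x != 0.
Proof. by case: (z_pm x) => ->; rewrite ?oppr_eq0 oner_eq0. Qed.

Lemma pm1_neqE {x y} : z 0 y != z 0 x -> z 0 y = - z 0 x.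
Proof. by case: (z_pm x) (z_pm y) => -> [->|->]; rewrite ?opprK ?eqxx. Qed.

Lemma card_cross_nbrs x : #|cross_nbrs adj z x| = 1%N.
Proof.
set same := [set y | adj x y && (z 0 y == z 0 x)].
have card_nbrs : (#|same| + #|cross_nbrs adj z x| = 3)%N.
  rewrite -(cubic_adj x) -(cardsID [set y | z 0 y == z 0 x] [set y | adj x y]).
  by congr (_ + _)%N; apply: eq_card => y; rewrite !inE andbC.
have eigen_x : z 0 x = z 0 x *+ #|same| - z 0 x *+ #|cross_nbrs adj z x|.
  rewrite -{1}z_eigen mxE.
  (* the neighbours of x contribute z(x) if on the same side, -z(x) if not *)
  rewrite (eq_bigr (fun y => (if y \in same then z 0 x else 0) +
                             (if y \in cross_nbrs adj z x then - z 0 x else 0))).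
    by rewrite big_split /= -!big_mkcond /= !sumr_const mulNrn.
  move=> y _; rewrite mxE !inE (proj1 simple_adj y x).
  case: (adj x y); last by rewrite mulr0 addr0.
  rewrite mulr1 /=; case: eqP => [->|/eqP ne]; first by rewrite addr0.
  by rewrite add0r (pm1_neqE ne).
have : #|same| = #|cross_nbrs adj z x|.+1.
  apply/eqP; rewrite -(eqr_nat R); apply/eqP/(mulfI (pm1_neq0 x)).
  by rewrite !mulr_natr mulrS; apply/eqP; rewrite -subr_eq -eigen_x.
by move: card_nbrs => /[swap] ->; lia.
Qed.

Lemma cross_nbrs_exists x : exists y, y \in cross_nbrs adj z x.
Proof.
by have /eqP/cards1P [y ->] := card_cross_nbrs x; exists y; rewrite set11.
Qed.

Lemma cross_nbrs_uniq {x y1 y2} :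
  y1 \in cross_nbrs adj z x -> y2 \in cross_nbrs adj z x -> y1 = y2.
Proof.
by have /eqP/cards1P [y ->] := card_cross_nbrs x; rewrite !inE => /eqP-> /eqP->.
Qed.

End CrossNeighbours.

Section ContractedGraph.
Context {R : numFieldType} {n m k : nat} {adj : rel 'I_n} {z : 'rV[R]_n}
  {C D : 'I_m -> {set 'I_n}}.
Hypotheses (z_pm : forall x, z 0 x = 1 \/ z 0 x = -1)
  (decC : cycle_decomposition k adj [set x | z 0 x == 1] C)
  (decD : cycle_decomposition k adj [set x | z 0 x == -1] D).

Lemma Gset_sign {w x} : x \in Gset C D w ->
  z 0 x = if w is inl _ then 1 else -1.
Proof.
case: w => i /=.
  by move/(cycle_decomposition_sub decC); rewrite inE => /eqP.
by move/(cycle_decomposition_sub decD); rewrite inE => /eqP.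
Qed.

Lemma Gset_cover x : exists w, x \in Gset C D w.
Proof.
case: (z_pm x) => zx.
  have [|i xCi] := cycle_decomposition_cover decC x; first by rewrite inE zx.
  by exists (inl i).
have [|i xDi] := cycle_decomposition_cover decD x; first by rewrite inE zx.
by exists (inr i).
Qed.

Lemma Gset_uniq {w1 w2 x} : x \in Gset C D w1 -> x \in Gset C D w2 -> w1 = w2.
Proof.
move=> xw1 xw2; move: (Gset_sign xw1) (Gset_sign xw2) => ->.
case: w1 w2 xw1 xw2 => i [] j /= xi xj.
- by rewrite (cycle_decomposition_uniq decC xi xj).
- by move/eqP; rewrite (negPf (one_neq_opp1 R)).
- by move/eqP; rewrite eq_sym (negPf (one_neq_opp1 R)).
- by rewrite (cycle_decomposition_uniq decD xi xj).
Qed.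

Lemma Gset_adj {w1 w2 x y} : x \in Gset C D w1 -> y \in Gset C D w2 ->
  adj x y -> z 0 x = z 0 y -> w1 = w2.
Proof.
move=> xw1 yw2 xy; rewrite (Gset_sign xw1) (Gset_sign yw2).
case: w1 w2 xw1 yw2 => i [] j /= xi yj.
- by rewrite (cycle_decomposition_adj decC xi yj xy).
- by move/eqP; rewrite (negPf (one_neq_opp1 R)).
- by move/eqP; rewrite eq_sym (negPf (one_neq_opp1 R)).
- by rewrite (cycle_decomposition_adj decD xi yj xy).
Qed.

Lemma Garcs_bipartite : exists col : 'I_m + 'I_m -> bool,
  forall a w w', a \in Garcs adj z -> a.1 \in Gset C D w ->
    a.2 \in Gset C D w' -> col w != col w'.
Proof.
exists (fun w => if w is inl _ then true else false) => a w w'.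
rewrite inE => /andP [_ za]; case: w w' => i [] j // /Gset_sign za1 /Gset_sign za2.
  by rewrite za1 za2 eqxx in za.
by rewrite za1 za2 eqxx in za.
Qed.

Lemma Gset_induced_cycle w : induced_cycle adj k (Gset C D w).
Proof. by case: w => i /=; [case: decC | case: decD] => _ _ _. Qed.

Hypotheses (simple_adj : simple_graph adj) (cubic_adj : cubic adj)
  (simple_one : \rank (eigenspace (adjmx R adj) 1) = 1%N)
  (z_eigen : z *m adjmx R adj = z).

Lemma AutX_sign_eq {g} x y : g \in AutX adj ->
  (z 0 (g x) == z 0 (g y)) = (z 0 x == z 0 y).
Proof.
move=> gA; have z_neq0 : z != 0.
  by apply: contraNneq (pm1_neq0 z_pm x) => ->; rewrite mxE.
have [|c c_neq0 zg] := AutX_eigenvector_scale simple_one _ z_neq0 gA.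
  by rewrite scale1r.
by rewrite !zg (inj_eq (mulfI c_neq0)).
Qed.

Lemma AutX_Gset_closed {g w w' u v} : g \in AutX adj ->
  u \in Gset C D w -> v \in Gset C D w -> g u \in Gset C D w' -> g v \in Gset C D w'.
Proof.
move=> gA; apply: (induced_cycle_closed [pred y | g y \in Gset C D w']).
  exact: Gset_induced_cycle.
move=> x y xw yw xy /= gxw'; have [w'' gyw''] := Gset_cover (g y).
suff -> : w' = w'' by [].
apply: (Gset_adj gxw' gyw''); first by rewrite (AutX_adj gA).
by apply/eqP; rewrite AutX_sign_eq // (Gset_sign xw) (Gset_sign yw).
Qed.

(* [w] is only a dummy default: the pick succeeds because [Gset C D w] is
   nonempty. *)
Definition Gvertex_map (g : {perm 'I_n}) (w : 'I_m + 'I_m) : 'I_m + 'I_m :=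
  odflt w [pick w' | [exists x in Gset C D w, g x \in Gset C D w']].

Lemma Gvertex_mapE g w u : g \in AutX adj ->
  (g u \in Gset C D (Gvertex_map g w)) = (u \in Gset C D w).
Proof.
move=> gA; rewrite /Gvertex_map; case: pickP => /= [w1 | no_w1].
  case/existsP=> x1 /andP [x1w gx1w1]; apply/idP/idP; last first.
    by move=> uw; apply: AutX_Gset_closed x1w uw gx1w1.
  move=> guw1; have [w2 uw2] := Gset_cover u.
  have x1w2 : x1 \in Gset C D w2.
    rewrite -(permK g x1); apply: AutX_Gset_closed (AutX_inv gA) guw1 gx1w1 _.
    by rewrite permK.
  by rewrite (Gset_uniq x1w x1w2).
have /set0Pn [x xw] := induced_cycle_neq0 (Gset_induced_cycle w).
have [w' gxw'] := Gset_cover (g x).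
by move: (no_w1 w') => /existsP []; exists x; rewrite xw gxw'.
Qed.

Lemma Gvertex_map_inj {g} : g \in AutX adj -> injective (Gvertex_map g).
Proof.
move=> gA w1 w2 eq_w12.
have /set0Pn [x xw1] := induced_cycle_neq0 (Gset_induced_cycle w1).
have := Gvertex_mapE g w1 x gA; rewrite xw1 eq_w12 Gvertex_mapE //.
exact: Gset_uniq.
Qed.

Definition Gvertex_perm {g} (gA : g \in AutX adj) := perm (Gvertex_map_inj gA).

Lemma Garcs_cross a : (a \in Garcs adj z) = (a.2 \in cross_nbrs adj z a.1).
Proof. by rewrite !inE eq_sym. Qed.

Lemma Garcs_tail x : exists y, (x, y) \in Garcs adj z.
Proof.
have [y xy] := cross_nbrs_exists simple_adj cubic_adj z_eigen z_pm x.
by exists y; rewrite Garcs_cross.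
Qed.

Lemma pair_perm_Garcs g a : g \in AutX adj ->
  (pair_perm g a \in Garcs adj z) = (a \in Garcs adj z).
Proof. by move=> gA; rewrite !inE pair_permE /= (AutX_adj gA) AutX_sign_eq. Qed.

Lemma pair_perm_arc g a b : g \in AutX adj ->
  a \in Garcs adj z -> b \in Garcs adj z -> g a.1 = b.1 -> pair_perm g a = b.
Proof.
move=> gA aG bG ab1; rewrite Garcs_cross in bG.
have := pair_perm_Garcs g a gA; rewrite aG Garcs_cross pair_permE /= ab1 => ga2.
rewrite (cross_nbrs_uniq simple_adj cubic_adj z_eigen z_pm ga2 bG).
by case: b {ab1 ga2 bG}.
Qed.

Lemma autG_pair_perm g (gA : g \in AutX adj) :
  autG adj z C D (Gvertex_perm gA) (pair_perm g).
Proof.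
split=> [a | a w _ | a w _ | a _]; rewrite ?pair_perm_Garcs //.
- by rewrite pair_permE permE Gvertex_mapE.
- by rewrite pair_permE permE Gvertex_mapE.
- by rewrite !pair_permE.
Qed.

Lemma AutX_induces_autG g : g \in AutX adj ->
  exists phi : {perm 'I_m + 'I_m},
    autG adj z C D phi (pair_perm g) /\
    (forall w u, (g u \in Gset C D (phi w)) = (u \in Gset C D w)).
Proof.
move=> gA; exists (Gvertex_perm gA); split; first exact: autG_pair_perm.
by move=> w u; rewrite permE Gvertex_mapE.
Qed.

Lemma pair_perm_Garcs_inj g h :
  {in Garcs adj z, pair_perm g =1 pair_perm h} -> g = h.
Proof.
move=> eq_gh; apply/permP => x; have [y xy] := Garcs_tail x.
by have := eq_gh _ xy; rewrite !pair_permE => -[].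
Qed.

Lemma transitive_subgroup_Garcs_transitive (H : {group {perm 'I_n}}) :
  H \subset AutX adj -> (forall x y, exists2 h, h \in H & h x = y) ->
  forall a b, a \in Garcs adj z -> b \in Garcs adj z ->
    exists2 h, h \in H & pair_perm h a = b.
Proof.
move=> /subsetP HA H_trans a b aG bG; have [h hH hab] := H_trans a.1 b.1.
by exists h => //; apply: pair_perm_arc (HA h hH) aG bG hab.
Qed.

Lemma vertex_transitive_Garcs_transitive : vertex_transitive adj ->
  forall a b, a \in Garcs adj z -> b \in Garcs adj z ->
    exists phi psi, autG adj z C D phi psi /\ psi a = b.
Proof.
move=> vt_adj a b aG bG; have [g gA gab] := vt_adj a.1 b.1.
exists (Gvertex_perm gA), (pair_perm g).
by split; [apply: autG_pair_perm | apply: pair_perm_arc].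
Qed.

End ContractedGraph.

Theorem lemma4p2 (R : realFieldType) (n m k : nat) (adj : rel 'I_n)
  (z : 'rV[R]_n) (C D : 'I_m -> {set 'I_n}) :
  simple_graph adj -> cubic adj -> vertex_transitive adj ->
  \rank (eigenspace (adjmx R adj) 1) = 1%N ->
  z *m adjmx R adj = z ->
  (forall x, z 0 x = 1 \/ z 0 x = -1) ->
  cycle_decomposition k adj [set x | z 0 x == 1] C ->
  cycle_decomposition k adj [set x | z 0 x == -1] D ->
  [/\
    (* every automorphism of X induces an automorphism of G *)
    (forall g, g \in AutX adj ->
       exists phi : {perm 'I_m + 'I_m},
         autG adj z C D phi (pair_perm g) /\
         (forall w u, (g u \in Gset C D (phi w)) = (u \in Gset C D w))),
    (* ... and distinct automorphisms of X induce distinct ones of G *)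
    (forall g h, g \in AutX adj -> h \in AutX adj ->
       {in Garcs adj z, pair_perm g =1 pair_perm h} -> g = h),
    (* vertex-transitive subgroups of Aut(X) are arc-transitive on G *)
    (forall H : {group {perm 'I_n}}, H \subset AutX adj ->
       (forall x y : 'I_n, exists2 h, h \in H & h x = y) ->
       forall a b, a \in Garcs adj z -> b \in Garcs adj z ->
         exists2 h, h \in H & pair_perm h a = b),
    (* G is arc-transitive *)
    (forall a b, a \in Garcs adj z -> b \in Garcs adj z ->
       exists phi psi, autG adj z C D phi psi /\ psi a = b) &
    (* G is bipartite *)
    (exists col : 'I_m + 'I_m -> bool,
       forall a w w', a \in Garcs adj z -> a.1 \in Gset C D w ->
         a.2 \in Gset C D w' -> col w != col w')].
Proof.
move=> simple_adj cubic_adj vt_adj simple_one z_eigen z_pm decC decD.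
split.
- by apply: (AutX_induces_autG (k := k)).
- by move=> g h _ _; apply: pair_perm_Garcs_inj.
- by apply: transitive_subgroup_Garcs_transitive.
- by apply: (vertex_transitive_Garcs_transitive (k := k)).
- by apply: (Garcs_bipartite (k := k)).
Qed.
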